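(* Let $\mathrm{FOV}_{\min}\in(0,\pi/2]$, $L_{\max}>0$, $A_{\max}>0$, and consider maximising $R(B,\mathrm{FOV})$ over $\{(B,\mathrm{FOV}): B>0,\ \mathrm{FOV}\in(0,\pi/2],\ \mathrm{FOV}\ge f_{\mathrm{FOV}}(B)\}$. Then for every $B>0$ with $f_{\mathrm{FOV}}(B)\le\pi/2$, the maximum of $R(B,\cdot)$ over $[f_{\mathrm{FOV}}(B),\pi/2]$ is attained uniquely at $\mathrm{FOV}=f_{\mathrm{FOV}}(B)$; consequently every maximiser $(B^*,\mathrm{FOV}^* )$ of the problem (if one exists) lies on the boundary of the feasible region, i.e. $\mathrm{FOV}^*=f_{\mathrm{FOV}}(B^* )$.
   Context: Fix constants: an integer $N_{\mathrm{tier}}\ge1$; an integer $N_{\mathrm{PD}}\ge 1$; $\mathrm{FF}\in(0,1]$; $K_{\mathrm{PD}}>0$; $n_{\mathrm{CPC}}\ge 1$; $P_{\mathrm t}>0$; $w>0$; $R_{\mathrm{PD}}>0$; $\Gamma>0$; $N_0>0$. The design variables are $B>0$ and $\mathrm{FOV}\in(0,\pi/2]$. Write $\theta=\theta_{\mathrm{CPC}}=\mathrm{FOV}/(2N_{\mathrm{tier}}+1)$. Define $D_2(B)=\frac{1}{K_{\mathrm{PD}}B}\sqrt{N_{\mathrm{PD}}/\mathrm{FF}}$, $D_1(B,\mathrm{FOV})=D_2(B)\,\frac{n_{\mathrm{CPC}}}{\sin\theta}$, $P_{\mathrm r}(B,\mathrm{FOV})=\mathrm{FF}\,P_{\mathrm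 t}\Big(1-\exp\Big(-\frac{D_1(B,\mathrm{FOV})^2}{2w^2}\Big)\Big)$, and the achievable rate $R(B,\mathrm{FOV})=B\log_2\Big(1+\frac{(R_{\mathrm{PD}}P_{\mathrm r}(B,\mathrm{FOV}))^2}{\Gamma N_0 B}\Big)$. Set $K_1=\frac{1}{2K_{\mathrm{PD}}}\sqrt{N_{\mathrm{PD}}/\mathrm{FF}}$ and $K_2=\frac{\pi N_{\mathrm{PD}}n_{\mathrm{CPC}}^2}{4\,\mathrm{FF}\,K_{\mathrm{PD}}^2}$. Given $L_{\max},A_{\max}>0$, define for $\mathrm{FOV}\in(0,\pi/2]$ the boundary functions $f_{\mathrm L}(\mathrm{FOV})=\frac{K_1}{L_{\max}}\cdot\frac{n_{\mathrm{CPC}}+\sin\theta}{\sin\theta\tan\theta}$ and $f_{\mathrm A}(\mathrm{FOV})=\frac{1}{\sin\theta}\sqrt{\frac{K_2}{A_{\max}}\Big(1+\sum_{i=1}^{N_{\mathrm{tier}}}6i\cos(2i\theta)\Big)}$, their (generalised) inverses $f_{\mathrm L}^{-1}(B)=\inf\{\mathrm{FOV}\in(0,\pi/2]: f_{\mathrm L}(\mathrm{FOV})\le B\}$ and $f_{\mathrm A}^{-1}(B)=\inf\{\mathrm{FOV}\in(0,\pi/2]: f_{\mathrm A}(\mathrm{FOV})\le B\}$ (with $\inf\emptyset=+\infty$), and $f_{\mathrm{FOV}}(B)=\max\{\mathrm{FOV}_{\min},\,f_{\mathrm L}^{-1}(B),\,f_{\mathrm A}^{-1}(B)\}$. *)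

From Stdlib Require Import Reals.
From Coquelicot Require Import Coquelicot.
Open Scope R_scope.

Record sys := Sys {
  Ntier : nat; NPD : nat; FF : R; KPD : R; nCPC : R;
  Pt : R; w : R; RPD : R; Gamma : R; N0 : R }.

Definition valid_sys (s : sys) : Prop :=
  (1 <= Ntier s)%nat /\ (1 <= NPD s)%nat /\ 0 < FF s <= 1 /\ 0 < KPD s /\
  1 <= nCPC s /\ 0 < Pt s /\ 0 < w s /\ 0 < RPD s /\ 0 < Gamma s /\ 0 < N0 s.

Definition theta (s : sys) (FOV : R) : R := FOV / (2 * INR (Ntier s) + 1).

Definition D2 (s : sys) (B : R) : R :=
  / (KPD s * B) * sqrt (INR (NPD s) / FF s).

Definition D1 (s : sys) (B FOV : R) : R :=
  D2 s B * (nCPC s / sin (theta s FOV)).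

Definition Pr (s : sys) (B FOV : R) : R :=
  FF s * Pt s * (1 - exp (- (D1 s B FOV ^ 2 / (2 * w s ^ 2)))).

Definition rate (s : sys) (B FOV : R) : R :=
  B * (ln (1 + (RPD s * Pr s B FOV) ^ 2 / (Gamma s * N0 s * B)) / ln 2).

Definition K1 (s : sys) : R := / (2 * KPD s) * sqrt (INR (NPD s) / FF s).
Definition K2 (s : sys) : R :=
  PI * INR (NPD s) * nCPC s ^ 2 / (4 * FF s * KPD s ^ 2).

Definition fL (s : sys) (Lmax FOV : R) : R :=
  K1 s / Lmax * ((nCPC s + sin (theta s FOV)) /
                 (sin (theta s FOV) * tan (theta s FOV))).

(* sum_{i=1}^{Ntier} 6 i cos(2 i theta) *)
Definition tier_sum (s : sys) (FOV : R) : R :=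
  sum_f_R0 (fun j => 6 * INR (S j) * cos (2 * INR (S j) * theta s FOV))
           (Ntier s - 1).

Definition fA (s : sys) (Amax FOV : R) : R :=
  / sin (theta s FOV) * sqrt (K2 s / Amax * (1 + tier_sum s FOV)).

(* generalised inverse: inf { FOV in (0, pi/2] | f FOV <= B }, +oo if empty *)
Definition ginv (f : R -> R) (B : R) : Rbar :=
  Glb_Rbar (fun FOV => 0 < FOV <= PI / 2 /\ f FOV <= B).

Definition Rbar_max2 (x y : Rbar) : Rbar :=
  if Rbar_le_dec x y then y else x.

Definition fFOV (s : sys) (FOVmin Lmax Amax B : R) : Rbar :=
  Rbar_max2 (Finite FOVmin)
    (Rbar_max2 (ginv (fL s Lmax) B) (ginv (fA s Amax) B)).

Definition feasible (s : sys) (FOVmin Lmax Amax B FOV : R) : Prop :=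
  0 < B /\ 0 < FOV <= PI / 2 /\ Rbar_le (fFOV s FOVmin Lmax Amax B) (Finite FOV).

(* The achievable rate R(B, FOV) is strictly decreasing in FOV on (0, pi/2]
   for every fixed bandwidth B > 0.  Indeed the CPC half-angle
   theta = FOV / (2 Ntier + 1) increases with FOV and stays in (0, pi/2], so
   sin theta increases; hence the spot diameter D1 = D2 nCPC / sin theta
   decreases, the captured Gaussian power Pr = FF Pt (1 - exp(-D1^2/(2 w^2)))
   decreases, and R = B log2(1 + (RPD Pr)^2 / (Gamma N0 B)) decreases.
   The file proves this chain of monotonicity facts one link at a time
   ([theta_strict_mono], [sin_theta_strict_mono], [D1_strict_anti],
   [gaussian_capture_strict_mono], [Pr_strict_anti], [shannon_rate_strict_mono])
   and assembles them into [rate_strict_anti].  Separately, whenever the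
   boundary value fFOV(B) is at most pi/2 it is a finite real number
   >= FOVmin > 0 ([fFOV_finite]).  The theorem follows: on [fFOV(B), pi/2]
   the rate is uniquely maximised at the left end point, and a global
   maximiser off the boundary would be beaten by the boundary point with the
   same bandwidth. *)

From Stdlib Require Import Reals Lra Lia.
From Coquelicot Require Import Coquelicot.
Open Scope R_scope.

Lemma theta_strict_mono (s : sys) (a b : R) :
  0 < a -> a < b -> b <= PI / 2 ->
  0 < theta s a /\ theta s a < theta s b /\ theta s b <= PI / 2.
Proof.
  intros Ha Hab Hb.
  assert (Hden : 1 <= 2 * INR (Ntier s) + 1)
    by (pose proof (pos_INR (Ntier s)); lra).
  unfold theta, Rdiv.
  assert (Hinv : 0 < / (2 * INR (Ntier s) + 1)) by (apply Rinv_0_lt_compat; lra).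
  assert (Hinv1 : / (2 * INR (Ntier s) + 1) <= 1).
  { rewrite <- Rinv_1. apply Rinv_le_contravar; lra. }
  repeat split; nra.
Qed.

Lemma sin_theta_strict_mono (s : sys) (a b : R) :
  0 < a -> a < b -> b <= PI / 2 ->
  0 < sin (theta s a) < sin (theta s b).
Proof.
  intros Ha Hab Hb.
  destruct (theta_strict_mono s a b Ha Hab Hb) as [Hta [Htab Htb]].
  pose proof PI_RGT_0.
  split; [apply sin_gt_0 | apply sin_increasing_1]; lra.
Qed.

Lemma D2_pos (s : sys) (B : R) :
  valid_sys s -> 0 < B -> 0 < D2 s B.
Proof.
  intros (_ & HNP & HFF & HK & _) HB.
  unfold D2. apply Rmult_lt_0_compat.
  - apply Rinv_0_lt_compat, Rmult_lt_0_compat; lra.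
  - apply sqrt_lt_R0, Rdiv_lt_0_compat; [apply lt_0_INR; lia | lra].
Qed.

Lemma D1_strict_anti (s : sys) (B a b : R) :
  valid_sys s -> 0 < B -> 0 < a -> a < b -> b <= PI / 2 ->
  0 < D1 s B b < D1 s B a.
Proof.
  intros Hs HB Ha Hab Hb.
  pose proof (D2_pos s B Hs HB) as HD2.
  destruct Hs as (_ & _ & _ & _ & Hn & _).
  destruct (sin_theta_strict_mono s a b Ha Hab Hb) as [Hsa Hsab].
  unfold D1, Rdiv. split.
  - apply Rmult_lt_0_compat; [lra|].
    apply Rmult_lt_0_compat; [lra | apply Rinv_0_lt_compat; lra].
  - apply Rmult_lt_compat_l; [lra|]. apply Rmult_lt_compat_l; [lra|].
    apply Rinv_lt_contravar; nra.
Qed.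

Lemma gaussian_capture_strict_mono (c x y : R) :
  0 < c -> 0 < x -> x < y ->
  0 < 1 - exp (- (x ^ 2 / c)) < 1 - exp (- (y ^ 2 / c)).
Proof.
  intros Hc Hx Hxy.
  assert (Hx2 : 0 < x ^ 2 / c) by (apply Rdiv_lt_0_compat; nra).
  assert (Hxy2 : x ^ 2 / c < y ^ 2 / c).
  { unfold Rdiv. apply Rmult_lt_compat_r; [apply Rinv_0_lt_compat|]; nra. }
  assert (exp (- (x ^ 2 / c)) < 1) by (rewrite <- exp_0; apply exp_increasing; lra).
  assert (exp (- (y ^ 2 / c)) < exp (- (x ^ 2 / c))) by (apply exp_increasing; lra).
  lra.
Qed.

Lemma Pr_strict_anti (s : sys) (B a b : R) :
  valid_sys s -> 0 < B -> 0 < a -> a < b -> b <= PI / 2 ->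
  0 < Pr s B b < Pr s B a.
Proof.
  intros Hs HB Ha Hab Hb.
  destruct (D1_strict_anti s B a b Hs HB Ha Hab Hb) as [HDb HDab].
  destruct Hs as (_ & _ & HFF & _ & _ & HPt & Hw & _).
  assert (Hc : 0 < 2 * w s ^ 2) by nra.
  destruct (gaussian_capture_strict_mono _ _ _ Hc HDb HDab) as [Hcb Hcab].
  assert (HFP : 0 < FF s * Pt s) by nra.
  unfold Pr. split; [nra|]. apply Rmult_lt_compat_l; lra.
Qed.

Lemma shannon_rate_strict_mono (B r k p q : R) :
  0 < B -> 0 < r -> 0 < k -> 0 < p -> p < q ->
  B * (ln (1 + (r * p) ^ 2 / (k * B)) / ln 2) <
  B * (ln (1 + (r * q) ^ 2 / (k * B)) / ln 2).
Proof.
  intros HB Hr Hk Hp Hpq.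
  assert (HkB : 0 < k * B) by nra.
  assert (Hrp : 0 < r * p) by nra.
  assert (Hrpq : r * p < r * q) by nra.
  assert (Hsnr : 0 < (r * p) ^ 2 / (k * B)) by (apply Rdiv_lt_0_compat; nra).
  assert (Hsnr_lt : (r * p) ^ 2 / (k * B) < (r * q) ^ 2 / (k * B)).
  { unfold Rdiv. apply Rmult_lt_compat_r; [apply Rinv_0_lt_compat|]; nra. }
  assert (Hln : ln (1 + (r * p) ^ 2 / (k * B)) < ln (1 + (r * q) ^ 2 / (k * B)))
    by (apply ln_increasing; lra).
  assert (Hl2 : 0 < ln 2) by (rewrite <- ln_1; apply ln_increasing; lra).
  apply Rmult_lt_compat_l; [lra|].
  unfold Rdiv. apply Rmult_lt_compat_r; [apply Rinv_0_lt_compat|]; lra.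
Qed.

Lemma rate_strict_anti (s : sys) (B a b : R) :
  valid_sys s -> 0 < B -> 0 < a -> a < b -> b <= PI / 2 ->
  rate s B b < rate s B a.
Proof.
  intros Hs HB Ha Hab Hb.
  destruct (Pr_strict_anti s B a b Hs HB Ha Hab Hb) as [HPb HPab].
  destruct Hs as (_ & _ & _ & _ & _ & _ & _ & HR & HG & HN0).
  apply shannon_rate_strict_mono; auto; nra.
Qed.

Lemma Rbar_max2_ge_l (x y : Rbar) : Rbar_le x (Rbar_max2 x y).
Proof.
  unfold Rbar_max2. destruct (Rbar_le_dec x y); auto. apply Rbar_le_refl.
Qed.

Lemma fFOV_finite (s : sys) (FOVmin Lmax Amax B U : R) :
  Rbar_le (fFOV s FOVmin Lmax Amax B) (Finite U) ->
  Finite (real (fFOV s FOVmin Lmax Amax B)) = fFOV s FOVmin Lmax Amax B /\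
  FOVmin <= real (fFOV s FOVmin Lmax Amax B) <= U.
Proof.
  intros HU.
  pose proof (Rbar_max2_ge_l (Finite FOVmin)
    (Rbar_max2 (ginv (fL s Lmax) B) (ginv (fA s Amax) B))) as Hmin.
  fold (fFOV s FOVmin Lmax Amax B) in Hmin.
  destruct (fFOV s FOVmin Lmax Amax B); simpl in *; try contradiction; auto.
Qed.

Theorem lemma2 (s : sys) (FOVmin Lmax Amax : R) :
  valid_sys s ->
  0 < FOVmin <= PI / 2 -> 0 < Lmax -> 0 < Amax ->
  (forall B : R, 0 < B ->
     Rbar_le (fFOV s FOVmin Lmax Amax B) (Finite (PI / 2)) ->
     let F := real (fFOV s FOVmin Lmax Amax B) in
     Finite F = fFOV s FOVmin Lmax Amax B /\
     (forall FOV : R, F <= FOV <= PI / 2 -> FOV <> F ->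
        rate s B FOV < rate s B F)) /\
  (forall Bs FOVs : R,
     feasible s FOVmin Lmax Amax Bs FOVs ->
     (forall B FOV : R, feasible s FOVmin Lmax Amax B FOV ->
        rate s B FOV <= rate s Bs FOVs) ->
     Finite FOVs = fFOV s FOVmin Lmax Amax Bs).
Proof.
  intros Hs Hmin _ _. split.
  - intros B HB Hle F.
    destruct (fFOV_finite s FOVmin Lmax Amax B _ Hle) as [HF HFrange].
    fold F in HF, HFrange. split; [exact HF|].
    intros FOV HFOV Hne. apply rate_strict_anti; auto; lra.
  - intros Bs FOVs [HB [HFOVs Hle]] Hmax.
    destruct (fFOV_finite s FOVmin Lmax Amax Bs _ Hle) as [HF HFrange].
    set (F := real (fFOV s FOVmin Lmax Amax Bs)) in *.
    destruct (Req_dec FOVs F) as [Heq | Hne]; [rewrite Heq; exact HF|].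
    (* Otherwise the boundary point (Bs, F) is feasible with a strictly
       larger rate, contradicting maximality of (Bs, FOVs). *)
    assert (Hbdry : feasible s FOVmin Lmax Amax Bs F).
    { split; [exact HB|]. split; [lra|]. rewrite <- HF. apply Rbar_le_refl. }
    pose proof (Hmax _ _ Hbdry).
    pose proof (rate_strict_anti s Bs F FOVs Hs HB ltac:(lra) ltac:(lra) ltac:(lra)).
    lra.
Qed.
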